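(* Let $k\le n$ be positive integers, $x^*\in\mathbb{R}^n$ with support $S^*$, $|S^*|\le k$, $\mathcal{X}^0\in\mathbb{R}^n$ and $\eta>0$. Consider the oracle sequence $(S^t,u^t,\mathcal{X}^t)_{t\ge0}$ and the counts $c^t_i$ defined below. For all $i\in S^*$ and all integers $t\ge1$: if $c^t_i>\frac{2\|\mathcal{X}^0\|_\infty}{\eta|x^*_i|}$, then $i\in S^{t'}$ for all $t'\ge t$.
   Context: $S^*=\{i:x^*_i\neq0\}$. For $v\in\mathbb{R}^n$, $\mathrm{largest}_k(v)$ is the set of indices of the $k$ entries of $v$ with largest absolute value (ties broken by selecting the highest indices). The oracle sequence is defined for all $t\ge0$ by $S^t=\mathrm{largest}_k(\mathcal{X}^t)$, $u^t_i=-\eta x^*_i$ if $i\in S^*\setminus S^t$ and $u^t_i=0$ otherwise, and $\mathcal{X}^{t+1}=\mathcal{X}^t-u^t$. For $i\in\{1,\dots,n\}$, $c^0_i=0$ and, for $t\ge1$, $c^t_i=|\{t'\in\{0,\dots,t-1\}: i\in S^*\setminus S^{t'}\}|$. *)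

From HB Require Import structures.
From mathcomp Require Import all_boot all_order all_algebra.
Set Implicit Arguments. Unset Strict Implicit. Unset Printing Implicit Defensive.
Import Order.TTheory GRing.Theory Num.Theory.
Local Open Scope ring_scope.

Section Oracle.
Variables (R : realFieldType) (n : nat).

Definition supp (x : 'I_n -> R) : {set 'I_n} := [set i | x i != 0].

Definition norm_inf (x : 'I_n -> R) : R := \big[Num.max/0]_(i < n) `|x i|.

Definition beats (v : 'I_n -> R) (j i : 'I_n) : bool :=
  (`|v i| < `|v j|) || ((`|v i| == `|v j|) && (i < j)%N).

(* largest_k v: the k indices of largest |v_i| (ties -> highest indices),
   i.e. the indices beaten by fewer than k others in the strict total order. *)
Definition largest_k (k : nat) (v : 'I_n -> R) : {set 'I_n} :=
  [set i | (#|[set j | beats v j i]| < k)%N].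

Variables (k : nat) (xs X0 : 'I_n -> R) (eta : R).

Fixpoint Xo (t : nat) : 'I_n -> R :=
  match t with
  | 0 => X0
  | t'.+1 =>
      let X := Xo t' in
      let S := largest_k k X in
      fun i => X i - (if (i \in supp xs) && (i \notin S) then - (eta * xs i) else 0)
  end.

Definition So (t : nat) : {set 'I_n} := largest_k k (Xo t).

Definition uo (t : nat) : 'I_n -> R :=
  fun i => if (i \in supp xs) && (i \notin So t) then - (eta * xs i) else 0.

Definition co (t : nat) (i : 'I_n) : nat :=
  count (fun t' => (i \in supp xs) && (i \notin So t')) (iota 0 t).

End Oracle.

From HB Require Import structures.
From mathcomp Require Import all_boot all_order all_algebra.
From mathcomp Require Import lra.
Import Order.TTheory GRing.Theory Num.Theory.
Local Open Scope ring_scope.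

(* Each oracle step moves coordinate i of S* by eta x*_i exactly when i is
   missed, so X^t_i = X^0_i + c^t_i eta x*_i, while coordinates off S* never
   move. Once c^t_i eta |x*_i| > 2 ||X^0||, the coordinate i is larger in
   absolute value than every coordinate outside S*, so it can only be beaten
   by the other (at most k - 1) elements of S*; hence i is selected.  As c^t_i
   is nondecreasing in t, this persists. *)

Lemma norm_inf_ge {R : realFieldType} {n : nat} (x : 'I_n -> R) (j : 'I_n) :
  `|x j| <= norm_inf x.
Proof. exact: le_bigmax. Qed.

Lemma mem_largest_k {R : realFieldType} {n : nat} (k : nat) (v : 'I_n -> R)
    (A : {set 'I_n}) (i : 'I_n) :
  i \in A -> (#|A| <= k)%N -> (forall j, j \notin A -> `|v j| < `|v i|) ->
  i \in largest_k k v.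
Proof.
move=> iA cardA dom; rewrite inE.
have beatersA : [set j | beats v j i] \subset A :\ i.
  apply/subsetP => j; rewrite !inE /beats => beats_ji.
  have le_ij : `|v i| <= `|v j|.
    by case/orP: beats_ji => [/ltW | /andP[/eqP -> _]].
  apply/andP; split.
    by apply: contraTneq beats_ji => ->; rewrite ltxx eqxx ltnn.
  by apply: contraLR le_ij => /dom; rewrite -ltNge.
apply: leq_ltn_trans (subset_leq_card beatersA) _.
by rewrite (cardsD1 i A) iA add1n in cardA.
Qed.

Section Oracle.
Context {R : realFieldType} {n k : nat} {xs X0 : 'I_n -> R} {eta : R}.

Local Notation X := (Xo k xs X0 eta).
Local Notation c := (co k xs X0 eta).

Lemma XoE t i : X t i = X0 i + (c t i)%:R * (eta * xs i).
Proof.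
elim: t => [|t IH]; first by rewrite /co /= mul0r addr0.
rewrite /= IH /co -addn1 iotaD count_cat /= natrD addn0 -/(So k xs X0 eta t).
case: ((i \in supp xs) && (i \notin So k xs X0 eta t)) => /=.
  by rewrite opprK mulrDl mul1r addrA.
by rewrite subr0 addr0.
Qed.

Lemma co_le t t' i : (t <= t')%N -> (c t i <= c t' i)%N.
Proof. by move=> le_tt'; rewrite /co -(subnKC le_tt') iotaD count_cat leq_addr. Qed.

Lemma Xo_notin_supp t j : j \notin supp xs -> X t j = X0 j.
Proof. by rewrite inE negbK XoE => /eqP ->; rewrite !mulr0 addr0. Qed.

Lemma norm_inf_lt_Xo t i : 0 <= eta ->
  2 * norm_inf X0 < (c t i)%:R * (eta * `|xs i|) -> norm_inf X0 < `|X t i|.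
Proof.
move=> eta_ge0 big_c.
have drift : `|(c t i)%:R * (eta * xs i)| = (c t i)%:R * (eta * `|xs i|).
  by rewrite !normrM normr_nat ger0_norm.
have := lerB_normD ((c t i)%:R * (eta * xs i)) (X0 i).
rewrite XoE [X0 i + _]addrC drift.
have := norm_inf_ge X0 i; lra.
Qed.

End Oracle.

Theorem lemmaC2 (R : realFieldType) (n k : nat) (xs X0 : 'I_n -> R) (eta : R) :
  (0 < k)%N -> (k <= n)%N ->
  (#|supp xs| <= k)%N ->
  0 < eta ->
  forall i : 'I_n, i \in supp xs ->
  forall t : nat, (1 <= t)%N ->
  (co k xs X0 eta t i)%:R > 2 * norm_inf X0 / (eta * `|xs i|) ->
  forall t' : nat, (t <= t')%N -> i \in So k xs X0 eta t'.
Proof.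
move=> _ _ card_supp eta_gt0 i i_supp t _ big_c t' le_tt'.
have step_gt0 : 0 < eta * `|xs i|.
  by rewrite mulr_gt0 // normr_gt0; move: i_supp; rewrite inE.
have big_c' : 2 * norm_inf X0 < (co k xs X0 eta t' i)%:R * (eta * `|xs i|).
  rewrite -ltr_pdivrMr //; apply: lt_le_trans big_c _.
  by rewrite ler_nat co_le.
have Xi_big := norm_inf_lt_Xo t' i (ltW eta_gt0) big_c'.
apply: mem_largest_k i_supp card_supp _ => j j_supp.
by rewrite Xo_notin_supp //; apply: le_lt_trans (norm_inf_ge X0 j) Xi_big.
Qed.
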